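(* Let $n\ge 4$, $N=\{1,\dots,n\}$, fix distinct $i_1,i_2\in N$ and let $\hat N^c=N\setminus\{i_1,i_2\}$. Then the inequality $$x_{i_2i_1}+\sum_{j\in\hat N^c}\left(x_{i_1j}+x_{ji_1}\right)-\sum_{j\in\hat N^c}x_{i_2j}-\sum_{j,j'\in\hat N^c:\,j\ne j'} x_{jj'}\le 2-\frac{(n-3)(n-4)}{2}$$ defines a facet of the weak order polytope $P^n_{WO}$.
   Context: Let $N=\{1,\dots,n\}$ and $A_N=\{(i,j): i,j\in N, i\ne j\}$. A weak order on $N$ is a binary relation $W\subseteq N\times N$ that is reflexive, transitive and total; $(i,j)\in W$ is read ''$i$ is preferred over or tied with $j$''. The characteristic vector of $W$ is $x^W\in\{0,1\}^{A_N}$ with $x^W_{(i,j)}=1$ if $(i,j)\in W$ and $0$ otherwise. The weak order polytope $P^n_{WO}$ is the convex hull of the characteristic vectors of all weak orders on $N$; its points are vectors $x\in\mathbb{R}^{A_N}$ and $x_{ij}$ denotes the coordinate $x_{(i,j)}$. $P^n_{WO}$ has dimension $n(n-1)$. An inequality $\pi x\le\pi_0$ defines a facet of a polytope $P$ if it is valid for $P$ (holds for all $x\in P$) and the face $P\cap\{x:\pi x=\pi_0\}$ is nonempty, proper, and contains $\dim(P)$ affinely independent points. *)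

From mathcomp Require Import all_boot all_order all_algebra.
Set Implicit Arguments. Unset Strict Implicit. Unset Printing Implicit Defensive.
Import Order.TTheory GRing.Theory Num.Theory.
Local Open Scope ring_scope.

(* The arc set A_N = {(i,j) : i <> j} on N = 'I_n (i.e. {0,...,n-1}). *)
Definition arc (n : nat) := {p : 'I_n * 'I_n | p.1 != p.2}.

Definition vec (R : Type) (n : nat) := arc n -> R.

(* coordinate x_{ij} (only meaningful for i <> j; 0 on the diagonal) *)
Definition xc (R : ringType) n (x : vec R n) (i j : 'I_n) : R :=
  match insub (i, j) with Some a => x a | None => 0 end.

Definition weak_order n (W : {set 'I_n * 'I_n}) : Prop :=
  (forall i, (i, i) \in W) /\
  (forall i j k, (i, j) \in W -> (j, k) \in W -> (i, k) \in W) /\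
  (forall i j, ((i, j) \in W) || ((j, i) \in W)).

Definition charvec (R : ringType) n (W : {set 'I_n * 'I_n}) : vec R n :=
  fun a => if val a \in W then 1 else 0.

Definition P_WO (R : realFieldType) n (x : vec R n) : Prop :=
  exists lam : {ffun {set 'I_n * 'I_n} -> R},
    (forall W, 0 <= lam W) /\
    (forall W, lam W != 0 -> weak_order W) /\
    \sum_W lam W = 1 /\
    (forall a, x a = \sum_W lam W * charvec R W a).

Definition aff_indep (R : ringType) n k (v : 'I_k -> vec R n) : Prop :=
  forall c : 'I_k -> R,
    (forall a, \sum_(i < k) c i * v i a = 0) -> \sum_(i < k) c i = 0 ->
    forall i, c i = 0.

Definition has_dim (R : ringType) n (P : vec R n -> Prop) (d : nat) : Prop :=
  (exists v : 'I_d.+1 -> vec R n, (forall i, P (v i)) /\ aff_indep v) /\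
  (forall k (v : 'I_k -> vec R n), (forall i, P (v i)) -> aff_indep v ->
     (k <= d.+1)%N).

Definition linf (R : ringType) n (pi x : vec R n) : R := \sum_a pi a * x a.

Definition is_facet (R : realFieldType) n (P : vec R n -> Prop)
    (pi : vec R n) (pi0 : R) : Prop :=
  (forall x, P x -> linf pi x <= pi0) /\
  (exists x, P x /\ linf pi x = pi0) /\
  (exists x, P x /\ linf pi x != pi0) /\
  (exists d, has_dim P d /\
     exists v : 'I_d -> vec R n,
       (forall i, P (v i) /\ linf pi (v i) = pi0) /\ aff_indep v).

Definition ineq_lhs (R : ringType) n (i1 i2 : 'I_n) (x : vec R n) : R :=
  xc x i2 i1
  + \sum_(j | j \notin [set i1; i2]) (xc x i1 j + xc x j i1)
  - \sum_(j | j \notin [set i1; i2]) xc x i2 j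
  - \sum_(j | j \notin [set i1; i2])
      \sum_(j' | (j' \notin [set i1; i2]) && (j' != j)) xc x j j'.

Definition ineq_coef (R : ringType) n (i1 i2 : 'I_n) : vec R n :=
  fun a => ineq_lhs i1 i2 (fun b => if b == a then 1 else 0).

(* For a weak order, let t be the number of j outside {i1, i2} tied
   with i1 and beta = x_{i2 i1}.  Totality and transitivity give
     sum_j (x_{i1 j} + x_{j i1}) = (n - 2) + t,   sum_j x_{i2 j} >= beta t,
     2 sum_{j <> j'} x_{j j'} >= (n - 2)(n - 3) + t (t - 1),
   so the left-hand side exceeds the bound by at most
   beta (1 - t) + t - t (t - 1) / 2 - 1, which is <= 0 for beta in {0, 1} and
   every natural t.

   Every point used is the characteristic vector of a level order
   (i >= j iff r j <= r i, for a level function r : N -> nat).  If c x = c0 on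
   all of them, then c = 0 and c0 = 0: two level functions differing in a single
   comparison isolate one coordinate of c.  If c x = c0 only on the tight ones,
   the differences of seven tight level functions which rearrange i1, i2 and two
   further elements p, q give linear relations forcing (c, c0) to be a multiple
   of the inequality.  Enough affinely independent points are then extracted by
   a rank argument: the functionals constant on a finite family form the kernel
   of its homogenized matrix. *)

From mathcomp Require Import all_boot all_order all_algebra.
From mathcomp Require Import zify ring lra.
Set Implicit Arguments. Unset Strict Implicit. Unset Printing Implicit Defensive.
Import Order.TTheory GRing.Theory Num.Theory.
Local Open Scope ring_scope.

Section Coordinates.
Variables (R : nzRingType) (n : nat).
Implicit Types (x c : vec R n) (i j : 'I_n).

Lemma xc_diag x i : xc x i i = 0.
Proof. by rewrite /xc insubF //= eqxx. Qed.

Lemma xc_arc x (e : arc n) : xc x (val e).1 (val e).2 = x e.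
Proof. by rewrite /xc -surjective_pairing valK. Qed.

Lemma xc_sum (I : finType) (K : I -> R) (f : I -> vec R n) i j :
  xc (fun e => \sum_k K k * f k e) i j = \sum_k K k * xc (f k) i j.
Proof.
by rewrite /xc; case: insub => [//|]; rewrite big1 // => k _; rewrite mulr0.
Qed.

Lemma linf_xc c x : linf c x = \sum_i \sum_j xc c i j * xc x i j.
Proof.
rewrite pair_big /= (bigID (fun p : 'I_n * 'I_n => p.1 != p.2)) /=.
rewrite [X in _ = _ + X]big1 ?addr0 => [|[i j] /negPn/eqP /= ->]; last first.
  by rewrite xc_diag mul0r.
rewrite (reindex_omap (fun e : arc n => val e) insub) => [|p p12]; last first.
  by rewrite insubT.
apply: eq_big => [e|e _]; first by rewrite valK eqxx (valP e).
by rewrite !xc_arc.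
Qed.

Lemma xc_charvec (W : {set 'I_n * 'I_n}) i j :
  i != j -> xc (charvec R W) i j = ((i, j) \in W)%:R.
Proof. by move=> ij; rewrite /xc insubT /charvec /=; case: (_ \in _). Qed.

End Coordinates.

Lemma charvec_P_WO (R : realFieldType) n (W : {set 'I_n * 'I_n}) :
  weak_order W -> P_WO (charvec R W).
Proof.
move=> hW; exists [ffun W' => (W' == W)%:R]; split; [|split; [|split]].
- by move=> W'; rewrite ffunE ler0n.
- by move=> W'; rewrite ffunE; have [->|] := eqVneq W' W; rewrite ?eqxx.
- by rewrite (bigD1 W) //= big1 => [|W' /negPf W'W]; rewrite ffunE ?W'W ?eqxx ?addr0.
- move=> e; rewrite (bigD1 W) //= big1 => [|W' /negPf W'W].
    by rewrite ffunE eqxx mul1r addr0.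
  by rewrite ffunE W'W mul0r.
Qed.

Section LevelOrders.
Variables (R : nzRingType) (n : nat).
Implicit Types (r : 'I_n -> nat) (c : vec R n).

Definition level_order r : {set 'I_n * 'I_n} := [set p | r p.2 <= r p.1]%N.

Definition level_vec r : vec R n := charvec R (level_order r).

Lemma level_order_weak r : weak_order (level_order r).
Proof.
split; [|split] => [i|i j k|i j]; rewrite !inE //=; last exact: leq_total.
by move=> ji kj; apply: leq_trans kj ji.
Qed.

Lemma eq_level_vec r1 r2 : r1 =1 r2 -> level_vec r1 = level_vec r2.
Proof.
by move=> r12; congr charvec; apply/setP => p; rewrite !inE !r12.
Qed.

Lemma xc_level_vec r i j : i != j -> xc (level_vec r) i j = (r j <= r i)%N%:R.
Proof. by move=> ij; rewrite xc_charvec // inE. Qed.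

Lemma linf_level_vec c r :
  linf c (level_vec r) = \sum_i \sum_j xc c i j * (r j <= r i)%N%:R.
Proof.
rewrite linf_xc; apply: eq_bigr => i _; apply: eq_bigr => j _.
by have [->|ij] := eqVneq i j; rewrite ?xc_diag ?mul0r ?xc_level_vec.
Qed.

Lemma linf_level_vecB c (s : seq 'I_n) r1 r2 : uniq s ->
  {in [predC s], r1 =1 r2} ->
  (forall k l, k \notin s -> l \in s -> (r1 l < r1 k) && (r2 l < r2 k))%N ->
  linf c (level_vec r1) - linf c (level_vec r2) =
  \sum_(u <- s) \sum_(v <- s) xc c u v * ((r1 v <= r1 u)%N%:R - (r2 v <= r2 u)%N%:R).
Proof.
move=> s_uniq r12 below; rewrite !linf_level_vec -sumrB.
have cmp_eq k l : k \notin s -> l \in s ->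
    ((r1 l <= r1 k) = (r2 l <= r2 k))%N * ((r1 k <= r1 l) = (r2 k <= r2 l))%N.
  move=> ks ls; case/andP: (below k l ks ls) => lk1 lk2.
  by rewrite (ltnW lk1) (ltnW lk2) leqNgt lk1 leqNgt lk2.
rewrite (bigID (mem s)) /= [X in _ + X]big1 ?addr0 -?(big_uniq _ s_uniq) => [|u us].
  apply: eq_big_seq => u us; rewrite -sumrB (bigID (mem s)) /= [X in _ + X]big1.
    by rewrite addr0 -(big_uniq _ s_uniq); apply: eq_bigr => v _; rewrite mulrBr.
  by move=> v vs; rewrite (cmp_eq v u) // subrr.
rewrite -sumrB big1 // => v _; rewrite -mulrBr.
case: (boolP (v \in s)) => vs; first by rewrite (cmp_eq u v) // subrr mulr0.
by rewrite r12 // r12 // subrr mulr0.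
Qed.

End LevelOrders.

Lemma level_vec_P_WO (R : realFieldType) n (r : 'I_n -> nat) :
  P_WO (level_vec R r).
Proof. exact/charvec_P_WO/level_order_weak. Qed.

Section AffineIndependence.
Variables (F : fieldType) (n : nat).
Local Notation N := #|{: arc n}|.

(* Points v are homogenized to rows (v, 1) and functionals (c, c0) to (c, - c0),
   so that the product of the two is c v - c0. *)
Definition hom_mx k (v : 'I_k -> vec F n) : 'M[F]_(k, N + 1) :=
  \matrix_(i, j) match split j with inl e => v i (enum_val e) | inr _ => 1 end.

Definition hom_row (c : vec F n) (c0 : F) : 'rV[F]_(N + 1) :=
  \row_j match split j with inl e => c (enum_val e) | inr _ => - c0 end.

Lemma hom_mxE k (v : 'I_k -> vec F n) (u : 'rV_k) :
  u *m hom_mx v = hom_row (fun e => \sum_i u 0 i * v i e) (- \sum_i u 0 i).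
Proof.
apply/rowP => j; rewrite !mxE; under eq_bigr do rewrite mxE.
by case: (split j) => [e|_]; rewrite ?opprK //; under eq_bigr do rewrite mulr1.
Qed.

Lemma hom_row0 : hom_row (fun=> 0) 0 = 0.
Proof. by apply/rowP => j; rewrite !mxE; case: split; rewrite ?oppr0. Qed.

Lemma hom_row_eq0 c c0 : hom_row c c0 = 0 -> (forall e, c e = 0) /\ c0 = 0.
Proof.
move=> /rowP hom0; split => [e|].
  by have := hom0 (lshift 1 (enum_rank e)); rewrite !mxE (unsplitK (inl _)) enum_rankK.
by have /eqP := hom0 (rshift N ord0); rewrite !mxE (unsplitK (inr _)) oppr_eq0 => /eqP.
Qed.

Lemma aff_indep_row_free k (v : 'I_k -> vec F n) :
  aff_indep v <-> row_free (hom_mx v).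
Proof.
split => [indep_v | /row_free_inj free_v c sum_cv sum_c i].
  apply/inj_row_free => u /eqP; rewrite hom_mxE => /eqP /hom_row_eq0 [sum_uv /eqP].
  rewrite oppr_eq0 => /eqP sum_u; apply/rowP => i; rewrite mxE.
  exact: (indep_v (fun i => u 0 i)).
have /free_v/rowP/(_ i) : \row_i c i *m hom_mx v = 0 *m hom_mx v.
  rewrite mul0mx hom_mxE; apply/rowP => j; rewrite !mxE.
  case: (split j) => [e|_]; under eq_bigr do rewrite mxE.
    exact: sum_cv.
  by rewrite opprK.
by rewrite !mxE.
Qed.

Lemma aff_indep_card k (v : 'I_k -> vec F n) : aff_indep v -> (k <= N + 1)%N.
Proof. by move/aff_indep_row_free/eqP <-; exact: rank_leq_col. Qed.

Lemma aff_indep_comp k m (v : 'I_m -> vec F n) (f : 'I_k -> 'I_m) :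
  injective f -> aff_indep v -> aff_indep (v \o f).
Proof.
move=> f_inj /aff_indep_row_free/row_free_inj free_v.
apply/aff_indep_row_free/inj_row_free => u u_f.
have hom_f : hom_mx (v \o f) = rowsub f 1%:M *m hom_mx v.
  by rewrite -rowsubE; apply/matrixP => i j; rewrite !mxE.
have /free_v/rowP u_f0 : u *m rowsub f 1%:M *m hom_mx v = 0 *m hom_mx v.
  by rewrite -mulmxA -hom_f u_f !mul0mx.
apply/rowP => i; have := u_f0 (f i); rewrite !mxE (bigD1 i) //= big1 => [|i' ne_i'].
  by rewrite !mxE eqxx mulr1 addr0.
by rewrite !mxE (inj_eq f_inj) (negPf ne_i') mulr0.
Qed.

Lemma kermx_hom_mx (T : finType) (w : T -> vec F n) (c : vec F n) c0 :
  let W := hom_mx (fun i : 'I_#|T| => w (enum_val i)) in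
  (forall c' c0', (forall t, linf c' (w t) = c0') ->
     exists l, (forall e, c' e = l * c e) /\ c0' = l * c0) ->
  (kermx W^T <= hom_row c c0)%MS.
Proof.
move=> W hyp; apply/row_subP => i.
set u := row i _; have : u *m W^T = 0 by apply/sub_kermxP; exact: row_sub.
clearbody u => uW.
pose c' e := u 0 (lshift 1 (enum_rank e)); pose c0' := - u 0 (rshift N ord0).
have u_hom : u = hom_row c' c0'.
  apply/rowP => j; rewrite !mxE -[j]splitK /c' /c0'.
  case: (split j) => [e|o]; rewrite /= ?(unsplitK (inl _)) ?(unsplitK (inr _)).
    by rewrite enum_valK.
  by rewrite opprK ord1.
have [|l [c'_l c0'_l]] := hyp c' c0'.
  move=> t; have /eqP := congr1 (fun M : 'M_(1, _) => M 0 (enum_rank t)) uW.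
  rewrite /W !mxE big_split_ord /= big_ord1 !mxE (unsplitK (inr _)) mulr1 addr_eq0.
  move=> /eqP sum_eq; rewrite /c0' -sum_eq.
  transitivity (\sum_(i < N) c' (enum_val i) * w t (enum_val i)).
    by rewrite -(big_enum_val (fun e => c' e * w t e)).
  by apply: eq_bigr => e _; rewrite !mxE (unsplitK (inl _)) enum_rankK /c' enum_valK mulrC.
apply/submxP; exists l%:M; rewrite mul_scalar_mx u_hom.
apply/rowP => j; rewrite !mxE; case: (split j) => [e|_].
  by rewrite c'_l.
by rewrite c0'_l mulrN.
Qed.

Lemma exists_aff_indep (T : finType) (w : T -> vec F n) (c : vec F n) c0 k :
  (forall c' c0', (forall t, linf c' (w t) = c0') ->
     exists l, (forall e, c' e = l * c e) /\ c0' = l * c0) ->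
  (k + \rank (hom_row c c0) <= N + 1)%N ->
  exists v : 'I_k -> vec F n, (forall i, exists t, v i = w t) /\ aff_indep v.
Proof.
move=> hyp le_k; set W := hom_mx (fun i : 'I_#|T| => w (enum_val i)).
have le_k_rank : (k <= \rank W)%N.
  have := mxrankS (kermx_hom_mx hyp); rewrite mxrank_ker mxrank_tr -/W.
  by have := rank_leq_col W; lia.
pose f := maxrankfun W \o widen_ord le_k_rank.
exists (fun i => w (enum_val (f i))); split => [i|]; first by eexists.
apply: (@aff_indep_comp _ _ (fun i => w (enum_val (maxrankfun W i)))).
  by move=> i j /(congr1 val) /= /val_inj.
apply/aff_indep_row_free; move: (maxrowsub_free W).
by congr row_free; apply/matrixP => i j; rewrite !mxE.
Qed.

End AffineIndependence.

Lemma sum_nat_eq_andb (R : nzSemiRingType) (I : finType) (P C : pred I) (u : I) :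
  \sum_(j | P j) ((j == u) && C j)%:R = (P u && C u)%:R :> R.
Proof.
case: (boolP (P u)) => Pu; last first.
  by rewrite big1 // => j Pj; case: eqP => // ju; rewrite -ju Pj in Pu.
by rewrite (bigD1 u) //= eqxx big1 ?addr0 // => j /andP[_ /negPf ->].
Qed.

Section InequalityCoefficients.
Variables (R : comNzRingType) (n : nat) (a b : 'I_n).
Local Notation pi := (ineq_coef R a b).
Local Notation Nc j := (j \notin [set a; b]).
Implicit Types x y : vec R n.

Lemma ineq_lhs_sum (I : finType) (K : I -> R) (f : I -> vec R n) :
  ineq_lhs a b (fun e => \sum_k K k * f k e) = \sum_k K k * ineq_lhs a b (f k).
Proof.
have sumE := xc_sum K f; rewrite /ineq_lhs.
under [RHS]eq_bigr do rewrite mulrBr mulrBr mulrDr !mulr_sumr.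
rewrite !sumrB [in RHS]big_split /=; congr (_ + _ - _ - _).
- exact: sumE.
- rewrite [RHS]exchange_big; apply: eq_bigr => j _; rewrite !sumE -big_split.
  by apply: eq_bigr => k _; rewrite mulrDr.
- by rewrite [RHS]exchange_big; apply: eq_bigr => j _; rewrite sumE.
rewrite [RHS]exchange_big; apply: eq_bigr => j _.
under [RHS]eq_bigr do rewrite mulr_sumr.
by rewrite [RHS]exchange_big; apply: eq_bigr => j' _; rewrite sumE.
Qed.

Lemma eq_ineq_lhs x y : (forall i j, xc x i j = xc y i j) ->
  ineq_lhs a b x = ineq_lhs a b y.
Proof.
move=> xy; rewrite /ineq_lhs xy; congr (_ + _ - _ - _).
- by apply: eq_bigr => j _; rewrite !xy.
- by apply: eq_bigr => j _; rewrite xy.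
by apply: eq_bigr => j _; apply: eq_bigr => j' _; rewrite xy.
Qed.

Lemma linf_ineq_coef x : linf pi x = ineq_lhs a b x.
Proof.
pose unit_vec e' : vec R n := fun e => if e == e' then 1 else 0.
have -> : ineq_lhs a b x = ineq_lhs a b (fun e => \sum_e' x e' * unit_vec e' e).
  apply: eq_ineq_lhs => i j; rewrite /xc; case: insub => // e.
  rewrite (bigD1 e) //= /unit_vec eqxx mulr1 big1 ?addr0 // => e' /negPf.
  by rewrite eq_sym => ->; rewrite mulr0.
by rewrite (ineq_lhs_sum x unit_vec); apply: eq_bigr => e _; rewrite mulrC.
Qed.

Lemma xc_ineq_coef u v : u != v ->
  xc pi u v = ((b == u) && (a == v))%:R + (((a == u) && Nc v)%:R
    + (Nc u && (a == v))%:R) - ((b == u) && Nc v)%:R - [&& Nc u, Nc v & v != u]%:R.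
Proof.
move=> uv; rewrite /xc insubT /ineq_coef; set e0 := Sub _ _.
have unitE s t : xc (fun e => if e == e0 then 1 else 0) s t = ((s == u) && (t == v))%:R :> R.
  have [-> | st] := eqVneq s t.
    by rewrite xc_diag; case: eqP => [->|//]; rewrite (negPf uv).
  by rewrite /xc insubT -val_eqE /= xpair_eqE; case: (_ && _).
rewrite /ineq_lhs unitE; congr (_ + _ - _ - _).
- rewrite big_split /=; congr (_ + _).
    by under eq_bigr do rewrite unitE andbC; rewrite sum_nat_eq_andb andbC.
  by under eq_bigr do rewrite unitE; rewrite sum_nat_eq_andb.
- by under eq_bigr do rewrite unitE andbC; rewrite sum_nat_eq_andb andbC.
under eq_bigr => j _ do under eq_bigr => j' _ do rewrite unitE andbC.
under eq_bigr => j _ do rewrite (sum_nat_eq_andb _ (fun j' => Nc j' && (j' != j))) andbC.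
by rewrite sum_nat_eq_andb.
Qed.

Lemma notin_pair_eqF j : Nc j ->
  [/\ (j == a) = false, (j == b) = false, (a == j) = false & (b == j) = false].
Proof.
by rewrite in_set2 negb_or => /andP[ja jb]; rewrite !(eq_sym _ j) !(negPf ja, negPf jb).
Qed.

Lemma pair_or_outside j : [\/ j = a, j = b | Nc j].
Proof.
have [->|ja] := eqVneq j a; first exact: Or31.
have [->|jb] := eqVneq j b; first exact: Or32.
by apply: Or33; rewrite in_set2 negb_or ja jb.
Qed.

Hypothesis ab : a != b.

Let ba : (b == a) = false. Proof. by rewrite eq_sym (negPf ab). Qed.
Let pairE := (in_set2, eqxx, orbT, negPf ab, ba).
Let sumE := (addr0, add0r, subr0, sub0r).

Lemma ineq_coef_ba : xc pi b a = 1.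
Proof. by rewrite xc_ineq_coef 1?eq_sym // ?pairE /= !sumE. Qed.

Lemma ineq_coef_ab : xc pi a b = 0.
Proof. by rewrite xc_ineq_coef // ?pairE /= !sumE. Qed.

Section OutsidePair.
Variable j : 'I_n.
Hypothesis jN : Nc j.

Let jE := notin_pair_eqF jN.
Let ja : (j == a) = false. Proof. by case: jE. Qed.
Let jb : (j == b) = false. Proof. by case: jE. Qed.
Let aj : (a == j) = false. Proof. by case: jE. Qed.
Let bj : (b == j) = false. Proof. by case: jE. Qed.
Let jF := (ja, jb, aj, bj).

Lemma ineq_coef_aN : xc pi a j = 1.
Proof. by rewrite xc_ineq_coef ?jF // jN ?pairE ?jF /= !sumE. Qed.

Lemma ineq_coef_Na : xc pi j a = 1.
Proof. by rewrite xc_ineq_coef ?jF // jN ?pairE ?jF /= !sumE. Qed.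

Lemma ineq_coef_bN : xc pi b j = -1.
Proof. by rewrite xc_ineq_coef ?jF // jN ?pairE ?jF /= !sumE. Qed.

Lemma ineq_coef_Nb : xc pi j b = 0.
Proof. by rewrite xc_ineq_coef ?jF // jN ?pairE ?jF /= !sumE. Qed.

Lemma ineq_coef_NN j' : Nc j' -> j != j' -> xc pi j j' = -1.
Proof.
move=> j'N jj'; have [_ _ aj' _] := notin_pair_eqF j'N.
by rewrite xc_ineq_coef // jN j'N (eq_sym j') jj' ?pairE aj bj aj' /= !sumE.
Qed.

End OutsidePair.
End InequalityCoefficients.

Section Pairs.
Variables (I : finType) (P : pred I).

Lemma exchange_pairs (V : nmodType) (X : I -> I -> V) :
  \sum_(j | P j) \sum_(j' | P j' && (j' != j)) X j' j =
  \sum_(j | P j) \sum_(j' | P j' && (j' != j)) X j j'.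
Proof.
rewrite (exchange_big_dep P) /= => [|j j' _ /andP[] //].
by apply: eq_bigr => j Pj; apply: eq_bigl => j'; rewrite Pj eq_sym.
Qed.

Lemma sum_neq (V : zmodType) (F : I -> V) j : P j ->
  \sum_(j' | P j' && (j' != j)) F j' = \sum_(j' | P j') F j' - F j.
Proof. by move=> Pj; rewrite [in RHS](bigD1 j) //= addrAC subrr add0r. Qed.

Lemma sum_pairs_one (R : pzRingType) :
  \sum_(j | P j) \sum_(j' | P j' && (j' != j)) (1 : R) =
  (\sum_(j | P j) 1) * (\sum_(j | P j) 1 - 1).
Proof.
by rewrite mulr_suml; apply: eq_bigr => j Pj; rewrite (sum_neq (fun=> 1)) // mul1r.
Qed.

Lemma sum_pairs_andb (R : pzRingType) (y : pred I) :
  \sum_(j | P j) \sum_(j' | P j' && (j' != j)) (y j && y j')%:R =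
  (\sum_(j | P j) (y j)%:R) * (\sum_(j | P j) (y j)%:R - 1) :> R.
Proof.
rewrite mulrBr mulr1 mulr_suml -sumrB; apply: eq_bigr => j Pj.
under eq_bigr do rewrite -mulnb natrM.
by rewrite -mulr_sumr (sum_neq (fun j' => (y j')%:R)) // mulrBr -natrM mulnb andbb.
Qed.

Lemma sum_pairs_ge (R : realDomainType) (X : I -> I -> R) (y : pred I) :
  (forall j j', P j -> P j' -> j' != j -> 1 + (y j && y j')%:R <= X j j' + X j' j) ->
  (\sum_(j | P j) 1) * (\sum_(j | P j) 1 - 1)
    + (\sum_(j | P j) (y j)%:R) * (\sum_(j | P j) (y j)%:R - 1)
  <= 2 * \sum_(j | P j) \sum_(j' | P j' && (j' != j)) X j j'.
Proof.
move=> X_ge; rewrite -sum_pairs_one -sum_pairs_andb -big_split /=.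
under eq_bigr do rewrite -big_split /=.
rewrite mulr2n mulrDl mul1r -[X in _ <= _ + X]exchange_pairs -big_split /=.
apply: ler_sum => j Pj; rewrite -big_split /=.
by apply: ler_sum => j' /andP[Pj' j'j]; apply: X_ge.
Qed.

End Pairs.

Lemma natr_quadratic_ge (R : realDomainType) (t : nat) :
  0 <= t%:R * (t%:R - 1) :> R /\ 2 * t%:R <= 2 + t%:R * (t%:R - 1) :> R.
Proof.
case: t => [|[|s]]; rewrite ?mul0r ?subrr ?mulr0 ?mul1r; [by lra | by lra |].
have s_ge0 : 0 <= s%:R :> R by rewrite ler0n.
rewrite -addn2 natrD; split; nra.
Qed.

Section Validity.
Variables (R : realFieldType) (n : nat) (a b : 'I_n).
Hypothesis ab : a != b.
Local Notation Nc j := (j \notin [set a; b]).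
Local Notation m := (\sum_(j | Nc j) (1 : R)).
Local Notation pi0 := (1 + m - m * (m - 1) / 2).

Lemma ineq_lhs_weak_order_le W : weak_order W ->
  ineq_lhs a b (charvec R W) <= pi0.
Proof.
move=> [_ [W_trans W_total]]; set x := charvec R W.
pose tied j := ((a, j) \in W) && ((j, a) \in W).
have sum_a : \sum_(j | Nc j) (xc x a j + xc x j a) = m + \sum_(j | Nc j) (tied j)%:R.
  rewrite -big_split; apply: eq_bigr => j jN; have [ja _ aj _] := notin_pair_eqF jN.
  rewrite !xc_charvec ?aj ?ja // /tied; have := W_total a j.
  by case: ((a, j) \in W); case: ((j, a) \in W) => //= _; rewrite addrC.
have sum_b : ((b, a) \in W)%:R * \sum_(j | Nc j) (tied j)%:R <= \sum_(j | Nc j) xc x b j.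
  rewrite mulr_sumr; apply: ler_sum => j jN; have [_ _ _ bj] := notin_pair_eqF jN.
  rewrite xc_charvec ?bj // -natrM mulnb.
  case: (boolP (((b, a) \in W) && tied j)) => [/and3P[ba aj _] | _]; last by rewrite ler0n.
  by rewrite (W_trans _ _ _ ba aj).
have pair_ge j j' : Nc j -> Nc j' -> j' != j ->
    1 + (tied j && tied j')%:R <= xc x j j' + xc x j' j.
  move=> jN j'N j'j; have jj' : j != j' by rewrite eq_sym.
  rewrite !xc_charvec //.
  case: (boolP (tied j && tied j')) => [/andP[/andP[aj ja] /andP[aj' j'a]] | _].
    by rewrite (W_trans _ _ _ ja aj') (W_trans _ _ _ j'a aj).
  by have := W_total j j'; case: ((j, j') \in W); case: ((j', j) \in W) => //= _; lra.
have sum_pairs := sum_pairs_ge pair_ge.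
have [t_ge0 t_quad] := natr_quadratic_ge R (\sum_(j | Nc j) tied j).
rewrite natr_sum in t_ge0 t_quad.
rewrite /ineq_lhs xc_charvec 1?eq_sym // sum_a.
move: sum_b sum_pairs t_ge0 t_quad; rewrite -/x.
by case: ((b, a) \in W) => /=; lra.
Qed.

Lemma linf_charvec_sum (c : vec R n) (x : vec R n) (lam : {ffun {set 'I_n * 'I_n} -> R}) :
  (forall e, x e = \sum_W lam W * charvec R W e) ->
  linf c x = \sum_W lam W * linf c (charvec R W).
Proof.
move=> xE; rewrite /linf; under eq_bigr do rewrite xE mulr_sumr.
rewrite exchange_big; apply: eq_bigr => W _; rewrite mulr_sumr.
by apply: eq_bigr => e _; rewrite mulrCA.
Qed.

Lemma ineq_valid x : P_WO x -> linf (ineq_coef R a b) x <= pi0.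
Proof.
move=> [lam [lam_ge0 [lam_weak [lam_sum1 xE]]]]; rewrite (linf_charvec_sum _ xE).
apply: le_trans (_ : \sum_W lam W * pi0 <= _); last first.
  by rewrite -mulr_suml lam_sum1 mul1r.
apply: ler_sum => W _; have [-> | lamW] := eqVneq (lam W) 0; first by rewrite !mul0r.
by rewrite ler_wpM2l // linf_ineq_coef ineq_lhs_weak_order_le //; apply: lam_weak.
Qed.

Lemma card_outside_pair : m = (n - 2)%:R.
Proof.
have := cardsC [set a; b]; rewrite cards2 ab card_ord /= => card_n.
rewrite -[1]/(1%:R) -natr_sum sum1dep_card; congr (_%:R).
have -> : #|[set j | Nc j]| = #|~: [set a; b]| by apply: eq_card => j; rewrite !inE.
by rewrite -[in RHS]card_n addKn.
Qed.

Lemma ineq_rhsE : (4 <= n)%N ->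
  pi0 = 2 - ((n - 3) * (n - 4))%:R / 2.
Proof.
move=> n_ge4; rewrite card_outside_pair.
have -> : (n - 2 = (n - 4) + 2)%N by lia.
have -> : (n - 3 = (n - 4) + 1)%N by lia.
by rewrite natrM !natrD; field.
Qed.

Lemma ineq_lhs_level_strict (r : 'I_n -> nat) :
  (r a < r b)%N -> (forall j, Nc j -> r b < r j)%N ->
  (forall j j', Nc j -> Nc j' -> r j = r j' -> j = j') ->
  ineq_lhs a b (level_vec R r) = pi0.
Proof.
move=> ab_lt b_lt r_inj; set x := level_vec R r.
have a_lt j : Nc j -> (r a < r j)%N by move=> jN; apply: ltn_trans ab_lt (b_lt j jN).
have sum_a : \sum_(j | Nc j) (xc x a j + xc x j a) = m.
  apply: eq_bigr => j jN; have [ja _ aj _] := notin_pair_eqF jN.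
  by rewrite !xc_level_vec ?aj ?ja // leqNgt a_lt // ltnW ?a_lt // add0r.
have sum_b : \sum_(j | Nc j) xc x b j = 0.
  apply: big1 => j jN; have [_ jb _ bj] := notin_pair_eqF jN.
  by rewrite xc_level_vec ?bj // leqNgt b_lt.
have sum_pairs : 2 * \sum_(j | Nc j) \sum_(j' | Nc j' && (j' != j)) xc x j j' = m * (m - 1).
  rewrite mulr2n mulrDl mul1r -[X in _ + X]exchange_pairs -big_split /=.
  transitivity (\sum_(j | Nc j) \sum_(j' | Nc j' && (j' != j)) (1 : R)).
    apply: eq_bigr => j jN; rewrite -big_split; apply: eq_bigr => j' /andP[j'N j'j] /=.
    have jj' : j != j' by rewrite eq_sym.
    rewrite !xc_level_vec //; case: (ltngtP (r j) (r j')) => [_|_|rjj'] /=.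
    - by rewrite add0r.
    - by rewrite addr0.
    by move: j'j; rewrite (r_inj _ _ jN j'N rjj') eqxx.
  exact: sum_pairs_one.
rewrite /ineq_lhs xc_level_vec 1?eq_sym // ltnW // sum_a sum_b.
by move: sum_pairs => /=; lra.
Qed.

End Validity.

(* Bounded level functions are the values of {ffun 'I_n -> 'I_(n + 5)}, a finite
   family from which affinely independent points can be extracted. *)
Definition level_bounded n (r : 'I_n -> nat) := forall k, (r k < n + 5)%N.

Section FourPoints.
Variables (R : realFieldType) (n : nat) (a b p q : 'I_n).
Local Notation below5 va vb vp vq := [&& va < 5, vb < 5, vp < 5 & vq < 5]%N.
Local Notation lv r := (level_vec R r).

Definition level4 (va vb vp vq : nat) (k : 'I_n) : nat :=
  if k == a then va else if k == b then vb else if k == p then vp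
  else if k == q then vq else (k + 5)%N.

Lemma level4_bounded va vb vp vq : below5 va vb vp vq ->
  level_bounded (level4 va vb vp vq).
Proof.
move=> /and4P[? ? ? ?] k; rewrite /level4.
by case: (k == a); [lia|]; case: (k == b); [lia|]; case: (k == p); [lia|];
  case: (k == q); [lia|]; have := ltn_ord k; lia.
Qed.

Hypotheses (ab : a != b) (pN : p \notin [set a; b]) (qN : q \notin [set a; b]).
Hypothesis pq : p != q.
Local Notation m := (\sum_(j | j \notin [set a; b]) (1 : R)).
Local Notation pi0 := (1 + m - m * (m - 1) / 2).
Local Notation pi := (ineq_coef R a b).
Local Notation tight r := (linf pi (lv r) = pi0).

Let ba : (b == a) = false. Proof. by rewrite eq_sym (negPf ab). Qed.
Let pab := notin_pair_eqF pN.
Let qab := notin_pair_eqF qN.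
Let qp : (q == p) = false. Proof. by rewrite eq_sym (negPf pq). Qed.

Let level4_a va vb vp vq : level4 va vb vp vq a = va.
Proof. by rewrite /level4 eqxx. Qed.
Let level4_b va vb vp vq : level4 va vb vp vq b = vb.
Proof. by rewrite /level4 ba eqxx. Qed.
Let level4_p va vb vp vq : level4 va vb vp vq p = vp.
Proof. by have [pa pb _ _] := pab; rewrite /level4 pa pb eqxx. Qed.
Let level4_q va vb vp vq : level4 va vb vp vq q = vq.
Proof. by have [qa qb _ _] := qab; rewrite /level4 qa qb qp eqxx. Qed.

Let level4E := (level4_a, level4_b, level4_p, level4_q).

Lemma linf_level4B (c : vec R n) va vb vp vq wa wb wp wq :
  below5 va vb vp vq -> below5 wa wb wp wq ->
  linf c (lv (level4 va vb vp vq)) - linf c (lv (level4 wa wb wp wq)) =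
  \sum_(u <- [:: a; b; p; q]) \sum_(v <- [:: a; b; p; q]) xc c u v *
    ((level4 va vb vp vq v <= level4 va vb vp vq u)%N%:R
     - (level4 wa wb wp wq v <= level4 wa wb wp wq u)%N%:R).
Proof.
have [pa pb ap bp] := pab; have [qa qb aq bq] := qab.
move=> /and4P[? ? ? ?] /and4P[? ? ? ?]; apply: linf_level_vecB.
- by rewrite /= !inE (negPf ab) ap aq bp bq pq.
- move=> k; rewrite !inE !negb_or /level4.
  by case/and4P => /negPf-> /negPf-> /negPf-> /negPf->.
move=> k l; rewrite !inE !negb_or => /and4P[/negPf ka /negPf kb /negPf kp /negPf kq].
by case/or4P => /eqP->; rewrite !level4E /level4 ka kb kp kq !ltn_addl.
Qed.

Lemma level4_base_tight : tight (level4 1 2 3 4).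
Proof.
have [pa pb _ _] := pab; have [qa qb _ _] := qab.
rewrite linf_ineq_coef; apply: (ineq_lhs_level_strict R ab) => [|j|j j'] //.
- by rewrite !level4E.
- rewrite level4E /level4 => /notin_pair_eqF[-> -> _ _].
  by case: (j == p) => //; case: (j == q); rewrite ?ltn_addl.
rewrite /level4 => /notin_pair_eqF[-> -> _ _] /notin_pair_eqF[-> -> _ _].
case: (eqVneq j p) => [jp|_]; case: (eqVneq j' p) => [j'p|_] //=;
  case: (eqVneq j q) => [jq|_]; case: (eqVneq j' q) => [j'q|_] //=;
  first [ by rewrite jp j'p | by rewrite jq j'q
        | by move/addIn/ord_inj | by rewrite !(addnC _ 5) ].
Qed.

Let coef4E := (ineq_coef_ab R ab, ineq_coef_ba R ab,
  ineq_coef_aN R ab pN, ineq_coef_aN R ab qN, ineq_coef_Na R ab pN, ineq_coef_Na R ab qN,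
  ineq_coef_bN R ab pN, ineq_coef_bN R ab qN, ineq_coef_Nb R ab pN, ineq_coef_Nb R ab qN,
  ineq_coef_NN R pN qN pq, ineq_coef_NN R qN pN (negbT qp)).

Local Ltac expand_level4B :=
  rewrite ?linf_level4B // !big_cons !big_nil !level4E !xc_diag /=.

Let tight_of_level4B va vb vp vq :
  linf pi (lv (level4 va vb vp vq)) - linf pi (lv (level4 1 2 3 4)) = 0 ->
  tight (level4 va vb vp vq).
Proof. by move/eqP; rewrite subr_eq0 level4_base_tight => /eqP. Qed.

Lemma level4_tight_a_low :
  [/\ tight (level4 1 1 3 4), tight (level4 1 3 1 4) & tight (level4 1 1 1 4)].
Proof.
by split; apply: tight_of_level4B; expand_level4B; rewrite !coef4E; lra.
Qed.

Lemma level4_tight_b_low :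
  [/\ tight (level4 2 1 2 4), tight (level4 2 1 2 2) & tight (level4 3 1 2 3)].
Proof.
by split; apply: tight_of_level4B; expand_level4B; rewrite !coef4E; lra.
Qed.

Lemma level4_not_tight : linf pi (lv (level4 2 1 3 4)) != pi0.
Proof.
rewrite -level4_base_tight -subr_eq0; expand_level4B; rewrite !coef4E.
by apply/eqP; lra.
Qed.

Section Kernel.
Variables (c : vec R n) (c0 : R).
Hypothesis c_tight : forall r, level_bounded r -> tight r -> linf c (lv r) = c0.

Let c_level4B va vb vp vq wa wb wp wq :
  tight (level4 va vb vp vq) -> tight (level4 wa wb wp wq) ->
  below5 va vb vp vq -> below5 wa wb wp wq ->
  linf c (lv (level4 va vb vp vq)) - linf c (lv (level4 wa wb wp wq)) = 0.
Proof.
move=> v_tight w_tight /level4_bounded v_bd /level4_bounded w_bd.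
by rewrite (c_tight v_bd v_tight) (c_tight w_bd w_tight) subrr.
Qed.

Lemma kernel_relations_b :
  [/\ xc c a b = 0, xc c p b = 0, xc c a p + xc c b p = 0 & xc c b p + xc c b a = 0].
Proof.
have [t1134 t1314 t1114] := level4_tight_a_low; have [t2124 _ _] := level4_tight_b_low.
have := c_level4B level4_base_tight t1134 isT isT.
have := c_level4B t1314 t1114 isT isT.
have := c_level4B level4_base_tight t1314 isT isT.
have := c_level4B t2124 t1314 isT isT.
by expand_level4B; split; lra.
Qed.

Lemma kernel_relations_pq : xc c a q + xc c p q = 0 /\ xc c p a + xc c p q = 0.
Proof.
have [t2124 t2122 t3123] := level4_tight_b_low.
have := c_level4B t2122 t2124 isT isT.
have := c_level4B t2122 t3123 isT isT.
by expand_level4B; split; lra.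
Qed.

End Kernel.

End FourPoints.

Section FullDimension.
Variables (R : realFieldType) (n : nat).
Local Notation N := #|{: arc n}|.
Local Notation lv r := (level_vec R r).

Lemma level_bounded_ffun (r : 'I_n -> nat) : level_bounded r ->
  exists f : {ffun 'I_n -> 'I_(n + 5)}, lv r = lv (fun k => f k).
Proof.
move=> r_bd; exists [ffun k => Ordinal (r_bd k)].
by apply: eq_level_vec => k; rewrite ffunE.
Qed.

Lemma level_vec_kernel (c : vec R n) c0 :
  (forall r, level_bounded r -> linf c (lv r) = c0) -> (forall e, c e = 0) /\ c0 = 0.
Proof.
move=> c_const.
have xc_eq0 i j : i != j -> xc c j i = 0.
  move=> ij; have ji : (j == i) = false by rewrite eq_sym (negPf ij).
  (* r 1 and r 0 only differ in whether j is tied with i or below it. *)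
  pose r (v : nat) k := if k == i then 1%N else if k == j then v else (k + 2)%N.
  have r_bd v : (v <= 1)%N -> level_bounded (r v).
    move=> v1 k; have := ltn_ord k.
    by rewrite /r; case: (k == i); case: (k == j); lia.
  have r_out v : {in [predC [:: i; j]], r v =1 (fun k => k + 2)%N}.
    by move=> k; rewrite !inE negb_or /r => /andP[/negPf-> /negPf->].
  have r_below k l : k \notin [:: i; j] -> l \in [:: i; j] ->
      (r 1 l < r 1 k)%N && (r 0 l < r 0 k)%N.
    move=> kij; rewrite !(r_out _ k kij) !inE.
    by case/orP => /eqP->; rewrite /r eqxx ?ji !ltn_addl.
  have r_eq : {in [predC [:: i; j]], r 1%N =1 r 0%N}.
    by move=> k kij; rewrite !r_out.
  have uniq_ij : uniq [:: i; j] by rewrite /= inE ij.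
  have := linf_level_vecB c uniq_ij r_eq r_below.
  rewrite (c_const _ (r_bd 1%N isT)) (c_const _ (r_bd 0%N isT)) subrr.
  by rewrite !big_cons !big_nil !xc_diag /r !eqxx ji /=; lra.
have c_eq0 e : c e = 0 by rewrite -xc_arc xc_eq0 // eq_sym (valP e).
split=> //; rewrite -(c_const (fun=> 0%N)) => [|k]; last by rewrite ltn_addl.
by rewrite /linf big1 // => e _; rewrite c_eq0 mul0r.
Qed.

Lemma P_WO_full_dim : has_dim (@P_WO R n) N.
Proof.
split=> [|k v _ /aff_indep_card]; last by rewrite addn1.
pose w (f : {ffun 'I_n -> 'I_(n + 5)}) := lv (fun k => f k).
have kernel0 c c0 : (forall f, linf c (w f) = c0) ->
    exists l, (forall e, c e = l * 0) /\ c0 = l * 0.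
  move=> c_const; exists 0; rewrite mul0r.
  by apply: level_vec_kernel => r /level_bounded_ffun[f ->]; rewrite c_const.
have rank0 : (N.+1 + \rank (hom_row (fun _ : arc n => 0%R : R) 0%R) <= N + 1)%N.
  by rewrite hom_row0 mxrank0 addn0 addn1.
have [v [v_w v_indep]] := exists_aff_indep kernel0 rank0.
by exists v; split=> // i; have [f ->] := v_w i; exact: level_vec_P_WO.
Qed.

End FullDimension.

Lemma two_outside_pair n (a b : 'I_n) : (4 <= n)%N -> a != b ->
  exists p q, [/\ p \notin [set a; b], q \notin [set a; b] & p != q].
Proof.
move=> n_ge4 ab; have := cardsC [set a; b]; rewrite cards2 ab card_ord /= => card_n.
have /card_gt1P[p [q [pN qN pq]]] : (1 < #|~: [set a; b]|)%N.
  by rewrite -(ltn_add2l 2) card_n.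
by exists p, q; rewrite -!in_setC.
Qed.

Section Facet.
Variables (R : realFieldType) (n : nat) (a b : 'I_n).
Hypotheses (n_ge4 : (4 <= n)%N) (ab : a != b).
Local Notation N := #|{: arc n}|.
Local Notation Nc j := (j \notin [set a; b]).
Local Notation m := (\sum_(j | Nc j) (1 : R)).
Local Notation pi0 := (1 + m - m * (m - 1) / 2).
Local Notation pi := (ineq_coef R a b).
Local Notation lv r := (level_vec R r).
Local Notation tight r := (linf pi (lv r) = pi0).

Lemma other_outside_pair j : Nc j -> exists2 q, Nc q & j != q.
Proof.
have [p [q [pN qN pq]]] := two_outside_pair n_ge4 ab.
by move=> jN; have [-> | jp] := eqVneq j p; [exists q | exists p].
Qed.

Section Kernel.
Variables (c : vec R n) (c0 : R).
Hypothesis c_tight : forall r, level_bounded r -> tight r -> linf c (lv r) = c0.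
Local Notation l := (xc c b a).

Let rel_b p q (pN : Nc p) (qN : Nc q) (pq : p != q) := kernel_relations_b ab pN qN pq c_tight.
Let rel_pq p q (pN : Nc p) (qN : Nc q) (pq : p != q) := kernel_relations_pq ab pN qN pq c_tight.

Let c_ab : xc c a b = 0.
Proof.
by have [p [q [pN qN pq]]] := two_outside_pair n_ge4 ab; have [] := rel_b pN qN pq.
Qed.

Let c_Nb j : Nc j -> xc c j b = 0.
Proof. by move=> jN; have [q qN jq] := other_outside_pair jN; have [] := rel_b jN qN jq. Qed.

Let c_bN j : Nc j -> xc c b j = - l.
Proof.
move=> jN; have [q qN jq] := other_outside_pair jN; have [_ _ _] := rel_b jN qN jq.
by move/eqP; rewrite addr_eq0 => /eqP.
Qed.

Let c_aN j : Nc j -> xc c a j = l.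
Proof.
move=> jN; have [q qN jq] := other_outside_pair jN; have [_ _ + _] := rel_b jN qN jq.
by rewrite (c_bN jN) => /eqP; rewrite subr_eq0 => /eqP.
Qed.

Let c_NN j j' : Nc j -> Nc j' -> j != j' -> xc c j j' = - l.
Proof.
move=> jN j'N jj'; have [+ _] := rel_pq jN j'N jj'.
by rewrite (c_aN j'N) => /eqP; rewrite addrC addr_eq0 => /eqP.
Qed.

Let c_Na j : Nc j -> xc c j a = l.
Proof.
move=> jN; have [q qN jq] := other_outside_pair jN; have [_ +] := rel_pq jN qN jq.
by rewrite (c_NN jN qN jq) => /eqP; rewrite subr_eq0 => /eqP.
Qed.

Lemma xc_kernel_ineq_coef u v : u != v -> xc c u v = l * xc pi u v.
Proof.
case: (pair_or_outside a b u) => [->|->|uN]; case: (pair_or_outside a b v) => [->|->|vN];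
  rewrite ?eqxx // => uv.
- by rewrite c_ab ineq_coef_ab ?mulr0.
- by rewrite c_aN // ineq_coef_aN ?mulr1.
- by rewrite ineq_coef_ba ?mulr1.
- by rewrite c_bN // ineq_coef_bN ?mulrN1.
- by rewrite c_Na // ineq_coef_Na ?mulr1.
- by rewrite c_Nb // ineq_coef_Nb ?mulr0.
- by rewrite c_NN // ineq_coef_NN ?mulrN1.
Qed.

Lemma ineq_kernel : exists l, (forall e, c e = l * pi e) /\ c0 = l * pi0.
Proof.
have c_pi e : c e = l * pi e.
  by rewrite -xc_arc -[pi e]xc_arc xc_kernel_ineq_coef // (valP e).
exists l; split=> //; have [p [q [pN qN _]]] := two_outside_pair n_ge4 ab.
have base := level4_base_tight R ab pN qN.
have base_bd : level_bounded (level4 a b p q 1 2 3 4) by exact: level4_bounded.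
rewrite -(c_tight base_bd base) -base /linf mulr_sumr.
by apply: eq_bigr => e _; rewrite c_pi mulrA.
Qed.

End Kernel.

Lemma ineq_facet_points : exists v : 'I_N -> vec R n,
  (forall i, P_WO (v i) /\ linf pi (v i) = pi0) /\ aff_indep v.
Proof.
have [p [q [pN qN _]]] := two_outside_pair n_ge4 ab.
have base := level4_base_tight R ab pN qN.
pose w (f : {ffun 'I_n -> 'I_(n + 5)}) :=
  if linf pi (lv (fun k => f k)) == pi0 then lv (fun k => f k)
  else lv (level4 a b p q 1 2 3 4).
have w_tight f : P_WO (w f) /\ linf pi (w f) = pi0.
  by rewrite /w; case: eqP => [f_tight | _]; split=> //; apply: level_vec_P_WO.
have kernel c c0 : (forall f, linf c (w f) = c0) ->
    exists l, (forall e, c e = l * pi e) /\ c0 = l * pi0.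
  by move=> c_const; apply: ineq_kernel => r /(level_bounded_ffun R)[f ->] f_tight;
    rewrite -(c_const f) /w f_tight eqxx.
have rank1 : (N + \rank (hom_row pi pi0) <= N + 1)%N.
  by rewrite leq_add2l rank_leq_row.
have [v [v_w v_indep]] := exists_aff_indep kernel rank1.
by exists v; split=> // i; have [f ->] := v_w i.
Qed.

End Facet.

Unset Implicit Arguments.

Theorem mainTheorem9 (R : realFieldType) (n : nat) (i1 i2 : 'I_n) :
  (4 <= n)%N -> i1 != i2 ->
  is_facet (@P_WO R n) (ineq_coef R i1 i2)
    (2 - ((n - 3) * (n - 4))%:R / 2).
Proof.
move=> n_ge4 i12; rewrite -(ineq_rhsE R i12 n_ge4).
have [p [q [pN qN pq]]] := two_outside_pair n_ge4 i12.
split; [|split; [|split]].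
- by move=> x; apply: ineq_valid.
- exists (level_vec R (level4 i1 i2 p q 1 2 3 4)).
  by split; [apply: level_vec_P_WO | apply: level4_base_tight].
- exists (level_vec R (level4 i1 i2 p q 2 1 3 4)).
  by split; [apply: level_vec_P_WO | apply: level4_not_tight].
by exists #|{: arc n}|; split; [apply: P_WO_full_dim | apply: ineq_facet_points].
Qed.
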